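(* In every non abelian dihedral group (i.e. every $\mathbb{D}_{2n}$ with $n\in\{3,4,\dots\}\cup\{\infty\}$) the following sentences are true: \begin{itemize} \item[$(P_1)$] $\forall x \forall y\, \big( (x^2 \neq 1 \wedge y^2 \neq 1)\Rightarrow xy=yx\big)$; \item[$(P_2)$] $\forall x \forall y \forall z\, \big((x \neq 1 \wedge x^2 = 1 \wedge y^2 \neq 1 \wedge xz \neq zx )\Rightarrow x^{-1}yx=y^{-1}\big)$; \item[$(P_3)$] $\forall x \forall y \forall z \forall t \forall u\, \big((xz \neq zx \wedge yt \neq ty \wedge x^2=1 \wedge y^2=1 \wedge (xy)^2=1)\Rightarrow (xy)u=u(xy)\big)$; \item[$(P_4)$] $\forall x \forall y \forall z \forall t\, \big((x \neq 1 \wedge x^2 = 1 \wedge y \neq 1 \wedge y^2 =1 \wedge z^2 \neq 1 \wedge t^2 \neq 1 \wedge xz=zx \wedge yt=ty) \Rightarrow x=y\big)$. \end{itemize}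
   Context: For $n\in\{1,2,\dots\}\cup\{\infty\}$, $\mathbb{D}_{2n}=\langle a,b \mid a^2=b^n=1,\ a^{-1}ba=b^{-1}\rangle$ (the relation $b^n=1$ omitted when $n=\infty$); a group is dihedral if it is isomorphic to some $\mathbb{D}_{2n}$, and it is non abelian exactly when $n\ge 3$ or $n=\infty$. *)

Record Group : Type := MkGroup {
  carrier :> Type;
  gmul : carrier -> carrier -> carrier;
  ginv : carrier -> carrier;
  gone : carrier;
  gmulA : forall x y z, gmul x (gmul y z) = gmul (gmul x y) z;
  gmul1l : forall x, gmul gone x = x;
  gmul1r : forall x, gmul x gone = x;
  gmulVl : forall x, gmul (ginv x) x = gone;
  gmulVr : forall x, gmul x (ginv x) = gone
}.

Arguments gmul {g} _ _.
Arguments ginv {g} _.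
Arguments gone {g}.

Fixpoint gpow {G : Group} (x : G) (m : nat) : G :=
  match m with
  | O => gone
  | S k => gmul x (gpow x k)
  end.

(* n = Some m : D_{2m};  n = None : D_{2 infinity} (relation b^n = 1 omitted) *)
Definition dih_rels {G : Group} (n : option nat) (a b : G) : Prop :=
  gmul a a = gone /\
  (match n with Some m => gpow b m = gone | None => True end) /\
  gmul (gmul (ginv a) b) a = ginv b.

Inductive generated {G : Group} (a b : G) : G -> Prop :=
  | gen_one : generated a b gone
  | gen_a : generated a b a
  | gen_b : generated a b b
  | gen_inv : forall x, generated a b x -> generated a b (ginv x)
  | gen_mul : forall x y, generated a b x -> generated a b y ->
      generated a b (gmul x y).

Definition is_hom {G H : Group} (f : G -> H) : Prop :=
  forall x y, f (gmul x y) = gmul (f x) (f y).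

(* G is isomorphic to the group presented by <a, b | dih_rels n a b>:
   G is generated by elements a, b satisfying the relations, and these
   satisfy the universal property of the presentation. *)
Definition is_dihedral (G : Group) (n : option nat) : Prop :=
  exists a b : G,
    dih_rels n a b /\
    (forall x : G, generated a b x) /\
    (forall (H : Group) (a' b' : H), dih_rels n a' b' ->
       exists f : G -> H, is_hom f /\ f a = a' /\ f b = b').

Definition dih_nonabelian_index (n : option nat) : Prop :=
  match n with Some m => 3 <= m | None => True end.

(* Only [a * a = 1], [a^-1 b a = b^-1] and generation by [a] and [b] are used:
   neither [b ^ n = 1], nor the universal property, nor non-commutativity (for
   [n <= 2] every element is an involution, so P2-P4 hold vacuously).  Every
   element is a rotation [b ^ k] or a reflection [a b ^ k].  Rotations commute,
   reflections are involutions inverting every rotation, and a rotation of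
   order at most 2 is central.  Hence non-involutions are rotations (P1),
   non-central involutions are reflections (P2; P3, as a product of two
   reflections is a rotation), and an involution centralizing a non-involution
   is a rotation of order 2, which is unique in a cyclic group (P4). *)

From Stdlib Require Import ZArith Lia.
Open Scope Z_scope.

Arguments gmulA {g} x y z.
Arguments gmul1l {g} x.
Arguments gmul1r {g} x.
Arguments gmulVl {g} x.
Arguments gmulVr {g} x.

Section GroupFacts.

Context {G : Group}.
Implicit Types x y z : G.

Lemma inv_uniq x y : gmul x y = gone -> ginv x = y.
Proof. intro H. rewrite <- (gmul1r (ginv x)), <- H, gmulA, gmulVl, gmul1l. reflexivity. Qed.

Lemma mulKl x y : gmul x (gmul (ginv x) y) = y.
Proof. rewrite gmulA, gmulVr, gmul1l. reflexivity. Qed.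

Lemma mulVKl x y : gmul (ginv x) (gmul x y) = y.
Proof. rewrite gmulA, gmulVl, gmul1l. reflexivity. Qed.

Lemma commute_of_conj_fixed x z : gmul (gmul (ginv z) x) z = x -> gmul x z = gmul z x.
Proof. intro H. rewrite <- H at 2. rewrite <- !gmulA, mulKl. reflexivity. Qed.

Lemma sqr_one_of_commute_conj_inv y z :
  gmul (gmul (ginv z) y) z = ginv y -> gmul y z = gmul z y -> gmul y y = gone.
Proof.
  intros Hconj Hcomm.
  rewrite <- gmulA, Hcomm, mulVKl in Hconj.
  rewrite Hconj at 2. apply gmulVr.
Qed.

Definition zpow (b : G) (k : Z) : G :=
  if Z.leb 0 k then gpow b (Z.to_nat k) else gpow (ginv b) (Z.to_nat (- k)).

Lemma zpow0 b : zpow b 0 = gone.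
Proof. reflexivity. Qed.

Lemma zpow1 b : zpow b 1 = b.
Proof. apply gmul1r. Qed.

Lemma zpow_succ b k : zpow b (k + 1) = gmul b (zpow b k).
Proof.
  unfold zpow. destruct (Z.leb_spec 0 k), (Z.leb_spec 0 (k + 1)); try lia.
  - replace (Z.to_nat (k + 1)) with (S (Z.to_nat k)) by lia. reflexivity.
  - replace k with (-1) by lia. simpl. rewrite gmul1r, gmulVr. reflexivity.
  - replace (Z.to_nat (- k)) with (S (Z.to_nat (- (k + 1)))) by lia.
    simpl. symmetry. apply mulKl.
Qed.

Lemma zpow_add b m n : zpow b (m + n) = gmul (zpow b m) (zpow b n).
Proof.
  revert n. induction m as [|m IH|m IH] using Z.peano_ind; intro n.
  - rewrite zpow0, gmul1l. reflexivity.
  - replace (Z.succ m + n) with ((m + n) + 1) by lia.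
    rewrite <- Z.add_1_r, !zpow_succ, IH, gmulA. reflexivity.
  - assert (Hpred : forall l, zpow b (Z.pred l) = gmul (ginv b) (zpow b l)).
    { intro l. rewrite <- (Z.succ_pred l) at 2. rewrite <- Z.add_1_r, zpow_succ, mulVKl.
      reflexivity. }
    replace (Z.pred m + n) with (Z.pred (m + n)) by lia.
    rewrite !Hpred, IH, gmulA. reflexivity.
Qed.

Lemma zpow_opp b k : zpow b (- k) = ginv (zpow b k).
Proof. symmetry. apply inv_uniq. rewrite <- zpow_add, Z.add_opp_diag_r. reflexivity. Qed.

Lemma zpow_mul_one b m q : zpow b m = gone -> zpow b (m * q) = gone.
Proof.
  intro Hm. induction q as [|q IH|q IH] using Z.peano_ind.
  - rewrite Z.mul_0_r. reflexivity.
  - rewrite Z.mul_succ_r, zpow_add, IH, Hm, gmul1l. reflexivity.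
  - rewrite Z.mul_pred_r, <- Z.add_opp_r, zpow_add, zpow_opp, IH, Hm, gmul1l.
    apply inv_uniq, gmul1l.
Qed.

Lemma zpow_odd_multiple b g k :
  zpow b (g + g) = gone -> (g | k) -> zpow b k <> gone -> zpow b k = zpow b g.
Proof.
  intros Hg [c ->] Hk. destruct (Z.Even_or_Odd c) as [[p ->] | [p ->]].
  - exfalso. apply Hk. replace (2 * p * g) with ((g + g) * p) by ring.
    apply zpow_mul_one, Hg.
  - replace ((2 * p + 1) * g) with ((g + g) * p + g) by ring.
    rewrite zpow_add, zpow_mul_one, gmul1l by exact Hg. reflexivity.
Qed.

Lemma zpow_involution_unique b k j :
  gmul (zpow b k) (zpow b k) = gone -> zpow b k <> gone ->
  gmul (zpow b j) (zpow b j) = gone -> zpow b j <> gone ->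
  zpow b k = zpow b j.
Proof.
  rewrite <- !zpow_add. intros Hk2 Hk Hj2 Hj.
  (* both powers equal [b ^ gcd k j], whose square is [1] by Bezout *)
  set (g := Z.gcd k j).
  destruct (Z.gcd_bezout k j g eq_refl) as (u & v & Huv).
  assert (Hg : zpow b (g + g) = gone).
  { replace (g + g) with ((k + k) * u + (j + j) * v) by lia.
    rewrite zpow_add, !zpow_mul_one, gmul1l by assumption. reflexivity. }
  rewrite (zpow_odd_multiple b g k), (zpow_odd_multiple b g j); trivial.
  - apply Z.gcd_divide_r.
  - apply Z.gcd_divide_l.
Qed.

End GroupFacts.

Section Dihedral.

Context {G : Group} (a b : G).
Hypothesis a_invol : gmul a a = gone.
Hypothesis a_conj_b : gmul (gmul (ginv a) b) a = ginv b.

Definition rotation (x : G) : Prop := exists k, x = zpow b k.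
Definition reflection (x : G) : Prop := exists k, x = gmul a (zpow b k).

Lemma ginv_a : ginv a = a.
Proof. apply inv_uniq, a_invol. Qed.

Lemma a_zpow k : gmul a (zpow b k) = gmul (zpow b (- k)) a.
Proof.
  assert (a_b : gmul a b = gmul (ginv b) a).
  { rewrite <- a_conj_b, ginv_a, <- gmulA, a_invol, gmul1r. reflexivity. }
  assert (a_binv : gmul a (ginv b) = gmul b a).
  { rewrite <- a_conj_b, ginv_a, !gmulA, a_invol, gmul1l. reflexivity. }
  induction k as [|k IH|k IH] using Z.peano_ind.
  - rewrite Z.opp_0, zpow0, gmul1r, gmul1l. reflexivity.
  - rewrite <- Z.add_1_r, Z.opp_add_distr, !zpow_add, gmulA, IH, <- gmulA,
      (zpow_opp b 1), !zpow1, a_b, gmulA. reflexivity.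
  - rewrite <- Z.sub_1_r, <- !Z.add_opp_r, Z.opp_add_distr, Z.opp_involutive,
      !zpow_add, gmulA, IH, <- gmulA, (zpow_opp b 1), !zpow1, a_binv, gmulA. reflexivity.
Qed.

Lemma conj_a_zpow k : gmul (gmul a (zpow b k)) a = zpow b (- k).
Proof. rewrite a_zpow, <- gmulA, a_invol, gmul1r. reflexivity. Qed.

Lemma reflection_sqr x : reflection x -> gmul x x = gone.
Proof.
  intros [k ->]. rewrite gmulA, conj_a_zpow, <- zpow_add, Z.add_opp_diag_l.
  reflexivity.
Qed.

Lemma rotation_commute x y : rotation x -> rotation y -> gmul x y = gmul y x.
Proof. intros [k ->] [j ->]. rewrite <- !zpow_add, Z.add_comm. reflexivity. Qed.

Lemma reflection_conj x y : reflection x -> rotation y ->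
  gmul (gmul (ginv x) y) x = ginv y.
Proof.
  intros Hx [j ->].
  rewrite (inv_uniq x x (reflection_sqr x Hx)), <- zpow_opp.
  destruct Hx as [k ->].
  rewrite <- (gmulA a), <- zpow_add, gmulA, conj_a_zpow, <- zpow_add.
  f_equal. ring.
Qed.

Lemma reflection_mul x y : reflection x -> reflection y -> rotation (gmul x y).
Proof.
  intros [k ->] [j ->]. exists (- k + j).
  rewrite gmulA, conj_a_zpow, zpow_add. reflexivity.
Qed.

Lemma generated_rotation_or_reflection x :
  generated a b x -> rotation x \/ reflection x.
Proof.
  induction 1 as [| | |x _ [[k ->] | Hx] |x y _ [[k ->] | [k ->]] _ [[j ->] | [j ->]]].
  - left. exists 0. reflexivity.
  - right. exists 0. symmetry. apply gmul1r.
  - left. exists 1. symmetry. apply gmul1r.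
  - left. exists (- k). symmetry. apply zpow_opp.
  - right. rewrite (inv_uniq x x (reflection_sqr x Hx)). exact Hx.
  - left. exists (k + j). symmetry. apply zpow_add.
  - right. exists (- k + j).
    rewrite zpow_add, !gmulA, a_zpow, Z.opp_involutive. reflexivity.
  - right. exists (k + j). rewrite zpow_add, gmulA. reflexivity.
  - left. exists (- k + j). rewrite gmulA, conj_a_zpow, zpow_add. reflexivity.
Qed.

Hypothesis generated_all : forall x : G, generated a b x.

Lemma rotation_of_sqr_neq1 x : gmul x x <> gone -> rotation x.
Proof.
  intro Hx. destruct (generated_rotation_or_reflection x (generated_all x)) as [Hr | Hr].
  - exact Hr.
  - contradiction (Hx (reflection_sqr x Hr)).
Qed.

Lemma rotation_involution_central x z : rotation x -> gmul x x = gone ->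
  gmul x z = gmul z x.
Proof.
  intros Hx Hx2. destruct (generated_rotation_or_reflection z (generated_all z)) as [Hz | Hz].
  - apply rotation_commute; assumption.
  - apply commute_of_conj_fixed. rewrite reflection_conj by assumption.
    apply inv_uniq, Hx2.
Qed.

Lemma reflection_of_noncentral_involution x z :
  gmul x x = gone -> gmul x z <> gmul z x -> reflection x.
Proof.
  intros Hx2 Hxz. destruct (generated_rotation_or_reflection x (generated_all x)) as [Hr | Hr].
  - contradiction (Hxz (rotation_involution_central x z Hr Hx2)).
  - exact Hr.
Qed.

Lemma rotation_of_centralizing_nonsquare x z : gmul x x = gone ->
  gmul z z <> gone -> gmul x z = gmul z x -> rotation x.
Proof.
  intros Hx2 Hz2 Hxz. destruct (generated_rotation_or_reflection x (generated_all x)) as [Hr | Hr].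
  - exact Hr.
  - exfalso. apply Hz2. apply (sqr_one_of_commute_conj_inv z x).
    + apply reflection_conj; [exact Hr | apply rotation_of_sqr_neq1, Hz2].
    + symmetry. exact Hxz.
Qed.

End Dihedral.

Theorem lemma4p3 (G : Group) (n : option nat) :
  dih_nonabelian_index n -> is_dihedral G n ->
  (* P1 *)
  (forall x y : G, gmul x x <> gone -> gmul y y <> gone ->
     gmul x y = gmul y x) /\
  (* P2 *)
  (forall x y z : G, x <> gone -> gmul x x = gone -> gmul y y <> gone ->
     gmul x z <> gmul z x ->
     gmul (gmul (ginv x) y) x = ginv y) /\
  (* P3 *)
  (forall x y z t u : G, gmul x z <> gmul z x -> gmul y t <> gmul t y ->
     gmul x x = gone -> gmul y y = gone -> gmul (gmul x y) (gmul x y) = gone ->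
     gmul (gmul x y) u = gmul u (gmul x y)) /\
  (* P4 *)
  (forall x y z t : G, x <> gone -> gmul x x = gone -> y <> gone ->
     gmul y y = gone -> gmul z z <> gone -> gmul t t <> gone ->
     gmul x z = gmul z x -> gmul y t = gmul t y -> x = y).
Proof.
  intros _ (a & b & (Ha & _ & Hab) & Hgen & _).
  split; [|split; [|split]].
  - intros x y Hx Hy.
    apply (rotation_commute b); apply (rotation_of_sqr_neq1 a b Ha Hab Hgen); assumption.
  - intros x y z _ Hx2 Hy2 Hxz.
    apply (reflection_conj a b Ha Hab).
    + exact (reflection_of_noncentral_involution a b Ha Hab Hgen x z Hx2 Hxz).
    + exact (rotation_of_sqr_neq1 a b Ha Hab Hgen y Hy2).
  - intros x y z t u Hxz Hyt Hx2 Hy2 Hxy2.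
    apply (rotation_involution_central a b Ha Hab Hgen); [|exact Hxy2].
    apply (reflection_mul a b Ha Hab).
    + exact (reflection_of_noncentral_involution a b Ha Hab Hgen x z Hx2 Hxz).
    + exact (reflection_of_noncentral_involution a b Ha Hab Hgen y t Hy2 Hyt).
  - intros x y z t Hx Hx2 Hy Hy2 Hz2 Ht2 Hxz Hyt.
    destruct (rotation_of_centralizing_nonsquare a b Ha Hab Hgen x z Hx2 Hz2 Hxz) as [k ->].
    destruct (rotation_of_centralizing_nonsquare a b Ha Hab Hgen y t Hy2 Ht2 Hyt) as [j ->].
    apply zpow_involution_unique; assumption.
Qed.
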